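(* Let $p\in[1,\infty]$, let $W^{(1)}\in\mathbb{R}^{n_1\times n_0}$, $W^{(2)}\in\mathbb{R}^{n_2\times n_1}$, and let $f:\mathbb{R}^{n_0}\to\mathbb{R}^{n_2}$ be the two-layer network $f(x)=W^{(2)}\sigma(W^{(1)}x)$, where $\sigma(z)=(\sigma_1(z_1),\dots,\sigma_{n_1}(z_{n_1}))$ and each $\sigma_i:\mathbb{R}\to\mathbb{R}$ is slope-restricted in $[\alpha_i,\beta_i]$ with $0\le \alpha_i\le\beta_i<\infty$. Let $\alpha=(\alpha_1,\dots,\alpha_{n_1})$, $\beta=(\beta_1,\dots,\beta_{n_1})$, let $d\in\mathbb{R}^{n_1}_{+}$ be any elementwise nonnegative vector and $D=\mathrm{diag}(d)$, so that $f(x)=W^{(2)}\big(\psi(W^{(1)}x;d)+DW^{(1)}x\big)$ with $\psi(z;d)=\sigma(z)-Dz$. Then $f$ is Lipschitz continuous with respect to the $\ell_p$ norm with constant $$L(d)=\|W^{(2)}\|_p\,\big\|\mathrm{diag}\big(\max(|\beta-d|,|d-\alpha|)\big)W^{(1)}\big\|_p+\|W^{(2)}DW^{(1)}\|_p,$$ where $\max$ and $|\cdot|$ are taken elementwise.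
   Context: A function $\sigma_i:\mathbb{R}\to\mathbb{R}$ is slope-restricted in $[\alpha_i,\beta_i]$ if $\alpha_i\le \frac{\sigma_i(x)-\sigma_i(y)}{x-y}\le\beta_i$ for all $x\neq y$. For a matrix $A$, $\|A\|_p=\sup_{\|x\|_p\le 1}\|Ax\|_p$ is the induced operator norm. A Lipschitz constant $L$ in $\ell_p$ means $\|f(x)-f(y)\|_p\le L\|x-y\|_p$ for all $x,y$. *)

From HB Require Import structures.
From mathcomp Require Import all_boot all_order all_algebra.
From mathcomp Require Import all_classical all_reals all_analysis.
Set Implicit Arguments. Unset Strict Implicit. Unset Printing Implicit Defensive.
Import Order.TTheory GRing.Theory Num.Theory.
Local Open Scope ring_scope.

Definition pnorm (R : realType) (n : nat) (p : \bar R) (x : 'cV[R]_n) : R :=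
  match p with
  | r%:E => (\sum_(i < n) `|x i 0| `^ r) `^ r^-1
  | _ => \big[Num.max/0]_(i < n) `|x i 0|
  end.

Definition opnorm (R : realType) (m n : nat) (p : \bar R) (A : 'M[R]_(m, n)) : R :=
  sup [set pnorm p (A *m x) | x in [set x : 'cV[R]_n | pnorm p x <= 1]].

Definition slope_restricted (R : realType) (s : R -> R) (a b : R) : Prop :=
  forall x y : R, x != y -> a <= (s x - s y) / (x - y) <= b.

Definition two_layer (R : realType) (n0 n1 n2 : nat)
  (W1 : 'M[R]_(n1, n0)) (W2 : 'M[R]_(n2, n1)) (sigma : 'I_n1 -> R -> R)
  (x : 'cV[R]_n0) : 'cV[R]_n2 :=
  W2 *m (\col_i sigma i ((W1 *m x) i 0)).

From HB Require Import structures.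
From mathcomp Require Import all_boot all_order all_algebra.
From mathcomp Require Import all_classical all_reals all_analysis.
Set Implicit Arguments.
Unset Strict Implicit.
Unset Printing Implicit Defensive.
Import Order.TTheory GRing.Theory Num.Theory.
Local Open Scope ring_scope.

(* Each secant slope k_i of sigma_i lies in [alpha_i, beta_i], so
   f x - f y = W2 diag(k) W1 (x - y) = W2 D W1 (x - y) + W2 diag(k - d) W1 (x - y)
   with |k_i - d_i| <= max(|beta_i - d_i|, |d_i - alpha_i|); the two terms are
   bounded by submultiplicativity of the induced norm and monotonicity of the
   l_p norm in the moduli of the entries.  The triangle inequality for the
   l_p norm follows from homogeneity and convexity of its unit ball, the
   latter from convexity of t |-> t ^ r on [0, +oo[ for r >= 1. *)

Section powR_facts.
Context {R : realType}.

Lemma powRK (s a : R) : s != 0 -> 0 <= a -> (a `^ s) `^ s^-1 = a.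
Proof. by move=> s0 a0; rewrite -powRrM mulfV // powRr1. Qed.

Lemma powR_le1 (a s : R) : 0 <= a -> 0 < s -> (a `^ s <= 1) = (a <= 1).
Proof.
move=> a0 s0; have one u : (1 : R) `^ u = 1 by rewrite powR1.
apply/idP/idP => h.
  rewrite -(powRK (lt0r_neq0 s0) a0) -(one s^-1).
  by apply: ge0_ler_powR; rewrite ?nnegrE ?invr_ge0 ?powR_ge0 ?(ltW s0).
by rewrite -(one s); apply: ge0_ler_powR; rewrite ?nnegrE ?(ltW s0).
Qed.

Lemma powR_convex (r t a b : R) : 1 <= r -> 0 <= t <= 1 ->
  0 <= a -> 0 <= b -> (t * a + (1 - t) * b) `^ r <= t * a `^ r + (1 - t) * b `^ r.
Proof.
move=> r1 /andP[t0 t1] a0 b0.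
have := @convex_powR R r r1 (Itv01 t0 t1) a b.
by rewrite !inE /= !in_itv /= !andbT => /(_ a0 b0); rewrite !convRE.
Qed.

End powR_facts.

Section lp_norm.
Variables (R : realType) (n : nat) (p : \bar R).
Hypothesis p_ge1 : (1 <= p)%E.
Implicit Types (x y : 'cV[R]_n) (c t : R).

Let p_cases : (exists2 r, 1 <= r & p = r%:E) \/ p = +oo%E.
Proof.
by case: p p_ge1 => [r|_|] //; [rewrite lee_fin => r1; left; exists r | right].
Qed.

Let sum_powR_ge0 r x : 0 <= \sum_i `|x i 0| `^ r.
Proof. by apply: sumr_ge0 => i _; apply: powR_ge0. Qed.

Let sum_powR_le1 r x : 0 < r -> (pnorm r%:E x <= 1) = (\sum_i `|x i 0| `^ r <= 1).
Proof. by move=> r0; apply: powR_le1 => //; rewrite invr_gt0. Qed.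

Lemma pnorm_ge0 x : 0 <= pnorm p x.
Proof.
case: p => [r||] /=; first exact: powR_ge0.
all: by elim/big_ind: _ => // a b a0 b0; rewrite le_max a0.
Qed.

Lemma pnorm_coord x i : `|x i 0| <= pnorm p x.
Proof.
have [[r r1 ->]|->] := p_cases; last exact: le_bigmax.
have r0 : 0 < r by apply: lt_le_trans r1.
rewrite -(powRK (lt0r_neq0 r0) (normr_ge0 (x i 0))).
apply: ge0_ler_powR; rewrite ?nnegrE ?invr_ge0 ?powR_ge0 ?sum_powR_ge0 ?(ltW r0) //.
by rewrite (bigD1 i) //= lerDl sumr_ge0 // => j _; apply: powR_ge0.
Qed.

Lemma pnorm_le x y : (forall i, `|x i 0| <= `|y i 0|) -> pnorm p x <= pnorm p y.
Proof.
move=> xy; have [[r r1 ->]|->] := p_cases; last by apply: le_bigmax2 => i _.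
have r0 : 0 < r by apply: lt_le_trans r1.
apply: ge0_ler_powR; rewrite ?nnegrE ?invr_ge0 ?sum_powR_ge0 ?(ltW r0) //.
by apply: ler_sum => i _; apply: ge0_ler_powR; rewrite ?nnegrE ?(ltW r0).
Qed.

Lemma pnormZ c x : pnorm p (c *: x) = `|c| * pnorm p x.
Proof.
have [[r r1 ->]|->] /= := p_cases.
  have r0 : 0 < r by apply: lt_le_trans r1.
  under eq_bigr do rewrite mxE normrM powRM //.
  by rewrite -mulr_sumr powRM ?powR_ge0 ?sum_powR_ge0 // powRK ?lt0r_neq0.
elim/big_ind2: _ => [|a b e f -> ->|i _]; first by rewrite mulr0.
  by rewrite maxr_pMr.
by rewrite mxE normrM.
Qed.

Lemma pnorm0 : pnorm p (0 : 'cV[R]_n) = 0.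
Proof. by rewrite -(scale0r (0 : 'cV[R]_n)) pnormZ normr0 mul0r. Qed.

Lemma pnorm_eq0 x : pnorm p x = 0 -> x = 0.
Proof.
move=> x0; apply/matrixP => i j; rewrite ord1 mxE; apply/eqP.
by rewrite -normr_le0 -x0 pnorm_coord.
Qed.

Lemma pnorm_convex_le1 t x y : 0 <= t <= 1 -> pnorm p x <= 1 -> pnorm p y <= 1 ->
  pnorm p (t *: x + (1 - t) *: y) <= 1.
Proof.
move=> t01 hx hy; have /andP[t0 t1] := t01; have t1' : 0 <= 1 - t by rewrite subr_ge0.
have entry i : `|(t *: x + (1 - t) *: y) i 0| <= t * `|x i 0| + (1 - t) * `|y i 0|.
  rewrite !mxE (le_trans (ler_normD _ _)) // !normrM.
  by rewrite (ger0_norm t0) (ger0_norm t1').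
have x1 i : `|x i 0| <= 1 := le_trans (pnorm_coord x i) hx.
have y1 i : `|y i 0| <= 1 := le_trans (pnorm_coord y i) hy.
have [[r r1 pE]|->] /= := p_cases; last first.
  apply: bigmax_le => // i _; apply: le_trans (entry i) _.
  by rewrite -[leRHS](subrKC t 1); apply: lerD; apply: ler_piMr.
have r0 : 0 < r by apply: lt_le_trans r1.
rewrite pE (sum_powR_le1 _ r0) in hx; rewrite pE (sum_powR_le1 _ r0) in hy.
rewrite pE (sum_powR_le1 _ r0).
apply: (@le_trans _ _ (\sum_i (t * `|x i 0| `^ r + (1 - t) * `|y i 0| `^ r))).
  apply: ler_sum => i _; apply: le_trans (powR_convex r1 t01 _ _); rewrite ?normr_ge0 //.
  by apply: ge0_ler_powR; rewrite ?nnegrE ?addr_ge0 ?mulr_ge0 ?(ltW r0) ?entry.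
rewrite big_split -!mulr_sumr /= -[leRHS](subrKC t 1).
by apply: lerD; apply: ler_piMr.
Qed.

Lemma pnormD x y : pnorm p (x + y) <= pnorm p x + pnorm p y.
Proof.
have [/pnorm_eq0 ->|Ax] := eqVneq (pnorm p x) 0; first by rewrite add0r pnorm0 add0r.
have [/pnorm_eq0 ->|By] := eqVneq (pnorm p y) 0; first by rewrite addr0 pnorm0 addr0.
set A := pnorm p x in Ax *; set B := pnorm p y in By *.
have A0 : 0 < A by rewrite lt_neqAle eq_sym Ax pnorm_ge0.
have B0 : 0 < B by rewrite lt_neqAle eq_sym By pnorm_ge0.
have AB0 : A + B != 0 by rewrite gt_eqF ?addr_gt0.
pose t := A / (A + B).
have t01 : 0 <= t <= 1.
  by rewrite divr_ge0 ?addr_ge0 ?pnorm_ge0 //= ler_pdivrMr ?addr_gt0 // mul1r lerDl pnorm_ge0.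
have normalized_le1 (z : 'cV[R]_n) : 0 < pnorm p z -> pnorm p ((pnorm p z)^-1 *: z) <= 1.
  by move=> z0; rewrite pnormZ gtr0_norm ?invr_gt0 // mulVf ?gt_eqF.
have -> : x + y = (A + B) *: (t *: (A^-1 *: x) + (1 - t) *: (B^-1 *: y)).
  rewrite scalerDr !scalerA.
  have tC : 1 - t = B / (A + B).
    by rewrite /t -[X in X - _](divff AB0) -mulrBl addrC addKr.
  by rewrite tC /t !(mulrC (A + B)) !divfK // !divff // !scale1r.
rewrite pnormZ gtr0_norm ?addr_gt0 // ler_piMr ?addr_ge0 ?pnorm_ge0 //.
exact: pnorm_convex_le1 t01 (normalized_le1 x A0) (normalized_le1 y B0).
Qed.

End lp_norm.

Section operator_norm.
Variables (R : realType) (p : \bar R).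
Hypothesis p_ge1 : (1 <= p)%E.

Lemma opnorm_has_ubound m n (A : 'M[R]_(m, n)) :
  has_ubound [set pnorm p (A *m x) | x in [set x : 'cV[R]_n | pnorm p x <= 1]].
Proof.
exists (pnorm p (\col_i \sum_j `|A i j|)) => _ [x /= x1 <-].
apply: pnorm_le => // i; rewrite !mxE [leRHS]ger0_norm ?sumr_ge0 //.
apply: le_trans (ler_norm_sum _ _ _) _; apply: ler_sum => j _.
by rewrite normrM ler_piMr // (le_trans (pnorm_coord p_ge1 x j) x1).
Qed.

Lemma pnorm_mulmx_le1 m n (A : 'M[R]_(m, n)) x :
  pnorm p x <= 1 -> pnorm p (A *m x) <= opnorm p A.
Proof. by move=> x1; apply: ub_le_sup; [exact: opnorm_has_ubound | exists x]. Qed.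

Lemma opnorm_ge0 m n (A : 'M[R]_(m, n)) : 0 <= opnorm p A.
Proof. by have := @pnorm_mulmx_le1 _ _ A 0; rewrite mulmx0 !pnorm0 //; apply. Qed.

Lemma pnorm_mulmx_le m n (A : 'M[R]_(m, n)) x :
  pnorm p (A *m x) <= opnorm p A * pnorm p x.
Proof.
have [/(pnorm_eq0 p_ge1) ->|x0] := eqVneq (pnorm p x) 0.
  by rewrite mulmx0 !pnorm0 // mulr0.
have xpos : 0 < pnorm p x by rewrite lt_neqAle eq_sym x0 pnorm_ge0.
have := @pnorm_mulmx_le1 _ _ A ((pnorm p x)^-1 *: x).
rewrite -scalemxAr !pnormZ // gtr0_norm ?invr_gt0 // mulVf // lexx => /(_ isT).
by rewrite ler_pdivrMl // mulrC.
Qed.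

Lemma pnorm_diag_mulmx_le n (e m : 'I_n -> R) (z : 'cV[R]_n) :
  (forall i, `|e i| <= m i) ->
  pnorm p (diag_mx (\row_i e i) *m z) <= pnorm p (diag_mx (\row_i m i) *m z).
Proof.
move=> em; apply: pnorm_le => // i; rewrite !mul_diag_mx !mxE !normrM ler_wpM2r //.
exact: le_trans (em i) (ler_norm _).
Qed.

End operator_norm.

Lemma slope_restricted_secant (R : realType) (s : R -> R) (a b c u v : R) :
  slope_restricted s a b ->
  exists2 k, s u - s v = k * (u - v) & `|k - c| <= Num.max `|b - c| `|c - a|.
Proof.
move=> slope; have [->|uv] := eqVneq u v.
  by exists c; rewrite ?subrr ?mulr0 // normr0 le_max normr_ge0.
have uv0 : u - v != 0 by rewrite subr_eq0.
exists ((s u - s v) / (u - v)); first by rewrite divfK.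
have /andP[ak kb] := slope _ _ uv.
rewrite ler_norml; apply/andP; split.
  rewrite lerNl opprB le_max; apply/orP; right.
  exact: le_trans (lerB (lexx c) ak) (ler_norm _).
rewrite le_max; apply/orP; left.
exact: le_trans (lerB kb (lexx c)) (ler_norm _).
Qed.

Lemma two_layer_subE (R : realType) (n0 n1 n2 : nat) (W1 : 'M[R]_(n1, n0))
    (W2 : 'M[R]_(n2, n1)) (sigma : 'I_n1 -> R -> R) (k : 'I_n1 -> R) x y :
  (forall i, sigma i ((W1 *m x) i 0) - sigma i ((W1 *m y) i 0)
             = k i * ((W1 *m x) i 0 - (W1 *m y) i 0)) ->
  two_layer W1 W2 sigma x - two_layer W1 W2 sigma y
  = W2 *m diag_mx (\row_i k i) *m W1 *m (x - y).
Proof.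
move=> secant; rewrite /two_layer -mulmxBr -!mulmxA; congr (W2 *m _).
apply/matrixP => i j; rewrite ord1 mulmxBr mul_diag_mx.
by have := secant i; rewrite !mxE => ->.
Qed.

Theorem lemma1 (R : realType) (n0 n1 n2 : nat) (p : \bar R)
  (W1 : 'M[R]_(n1, n0)) (W2 : 'M[R]_(n2, n1)) (sigma : 'I_n1 -> R -> R)
  (alpha beta d : 'I_n1 -> R) :
  (1 <= p)%E ->
  (forall i, 0 <= alpha i /\ alpha i <= beta i) ->
  (forall i, slope_restricted (sigma i) (alpha i) (beta i)) ->
  (forall i, 0 <= d i) ->
  forall x y : 'cV[R]_n0,
    pnorm p (two_layer W1 W2 sigma x - two_layer W1 W2 sigma y) <=
    (opnorm p W2 *
       opnorm p (diag_mx (\row_i Num.max `|beta i - d i| `|d i - alpha i|) *m W1)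
     + opnorm p (W2 *m diag_mx (\row_i d i) *m W1)) * pnorm p (x - y).
Proof.
move=> p_ge1 _ slope _ x y.
have [k secant k_near_d] := fin_all_exists2 (fun i =>
  slope_restricted_secant (d i) ((W1 *m x) i 0) ((W1 *m y) i 0) (slope i)).
have splitD : diag_mx (\row_i k i) = diag_mx (\row_i d i) + diag_mx (\row_i (k i - d i)).
  by apply/matrixP => i j; rewrite !mxE -mulrnDl addrC subrK.
rewrite (two_layer_subE W2 secant) splitD (mulmxDr W2) !mulmxDl.
apply: le_trans (pnormD p_ge1 _ _) _; rewrite mulrDl [leRHS]addrC.
apply: lerD; first exact: pnorm_mulmx_le.
rewrite -!mulmxA -mulrA; apply: le_trans (pnorm_mulmx_le p_ge1 _ _) _.
apply: ler_wpM2l; first exact: opnorm_ge0.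
apply: le_trans (pnorm_mulmx_le p_ge1 _ _); rewrite -mulmxA.
exact: pnorm_diag_mulmx_le.
Qed.
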